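(* Let $\kappa$ be a cardinal and let $F_\kappa$ be the free group on $\kappa$ generators. Then for every uncountable ordinal $\lambda$ there is a partition $F_\kappa=A_0\cup A_1$ into two cells such that there is no injective sequence $\vec{x}=\langle x_\xi : \xi<\lambda\rangle$ of elements of $F_\kappa$ and no $i\in 2$ with $\mathrm{FP}(\vec{x})\subseteq A_i$; that is, $\mathrm{Hind}(F_\kappa,\lambda)$ fails.
   Context: For a semigroup $(S,* )$, an ordinal $\alpha$ and a sequence $\vec{x}=\langle x_\xi : \xi<\alpha\rangle$ in $S$, $\mathrm{FP}(\vec{x})$ is the set of all finite products $x_{\xi_0}*x_{\xi_1}*\cdots*x_{\xi_l}$ with $l<\omega$ and $\xi_0<\xi_1<\cdots<\xi_l<\alpha$. $\mathrm{Hind}(S,\alpha)$ is the statement: for every partition $S=A_0\cup A_1$ into two cells there exist an (injective) sequence $\vec{x}=\langle x_\xi:\xi<\alpha\rangle$ in $S$ and an $i\in 2$ with $\mathrm{FP}(\vec{x})\subseteq A_i$. *)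

(* Free group on a type X of generators, realised as reduced words. *)
From Stdlib Require Import List Sorting.Sorted ClassicalEpsilon.
Import ListNotations.
Set Implicit Arguments.

Section FreeGroup.
Variable X : Type.

(* a letter is a generator with an exponent sign: (x, true) = x, (x, false) = x^-1 *)
Definition letter := (X * bool)%type.
Definition linv (a : letter) : letter := (fst a, negb (snd a)).

Fixpoint reduced (w : list letter) : Prop :=
  match w with
  | [] => True
  | a :: w' =>
      match w' with
      | [] => True
      | b :: _ => b <> linv a /\ reduced w'
      end
  end.

Definition letter_dec (a b : letter) : {a = b} + {a <> b} :=
  excluded_middle_informative (a = b).

Definition push (a : letter) (w : list letter) : list letter :=
  match w with
  | [] => [a]
  | b :: w' => if letter_dec b (linv a) then w' else a :: w
  end.

Lemma reduced_tail a w : reduced (a :: w) -> reduced w.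
Proof. destruct w as [|b w]; simpl; tauto. Qed.

Lemma push_reduced a w : reduced w -> reduced (push a w).
Proof.
  destruct w as [|b w']; simpl; auto.
  intro H. destruct (letter_dec b (linv a)) as [E|E].
  - exact (reduced_tail _ _ H).
  - simpl. split; assumption.
Qed.

Lemma fold_push_reduced u v : reduced v -> reduced (fold_right push v u).
Proof. induction u; simpl; auto using push_reduced. Qed.

Definition FreeGroup := { w : list letter | reduced w }.

Definition fg_one : FreeGroup := exist _ [] I.

Definition fg_mul (u v : FreeGroup) : FreeGroup :=
  exist _ (fold_right push (proj1_sig v) (proj1_sig u))
          (fold_push_reduced (proj1_sig u) _ (proj2_sig v)).

End FreeGroup.

(* An ordinal lambda is represented by a type with a strict well-order. *)
Definition strict_well_order (T : Type) (lt : T -> T -> Prop) : Prop :=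
  well_founded lt /\
  (forall a b c, lt a b -> lt b c -> lt a c) /\
  (forall a b, lt a b \/ a = b \/ lt b a).

Definition uncountable (T : Type) : Prop :=
  ~ exists f : T -> nat, forall a b, f a = f b -> a = b.

Definition fin_prod (X T : Type) (x : T -> FreeGroup X) (s : list T) : FreeGroup X :=
  fold_right (fun xi acc => fg_mul (x xi) acc) (fg_one X) s.

Definition in_FP (X T : Type) (lt : T -> T -> Prop) (x : T -> FreeGroup X)
  (g : FreeGroup X) : Prop :=
  exists s : list T, s <> [] /\ StronglySorted lt s /\ g = fin_prod x s.

(* Colour g by the parity of floor(log2 |g|).  Given an uncountable injective
   sequence, pass to uncountably many words of one length of the form A r B with
   |r| = d >= 1, such that no letter begins, and no letter ends, uncountably many
   of the middle parts r.  Write B = B' K and A = K^-1 A' with B' A' reduced.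
   Choosing indices greedily (each step avoids only countably many bad ones)
   gives arbitrarily long increasing lists whose products cancel exactly K at
   every junction, so a product of k factors has length E + s k for fixed E and
   s >= 1.  For a suitable k the lengths E + s k and E + s (k + 1) lie in
   consecutive dyadic intervals, so the product of such a list and that of its
   tail receive different colours. *)

From Stdlib Require Import List Sorting.Sorted Arith Lia Cantor.
From Stdlib Require Import Classical ClassicalEpsilon ProofIrrelevance.
Import ListNotations.

Set Implicit Arguments.

Section Words.
Variable X : Type.
Implicit Types (a b e : letter X) (u v l K : list (letter X)).

Definition last_error l : option (letter X) := hd_error (rev l).

Definition no_cancel u v : Prop :=
  forall a b, last_error u = Some a -> hd_error v = Some b -> b <> linv a.

Definition word_inv K : list (letter X) := rev (map (@linv X) K).

Lemma linvK a : linv (linv a) = a.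
Proof. destruct a as [y s]; unfold linv; simpl; rewrite Bool.negb_involutive; reflexivity. Qed.

Lemma hd_error_app u v :
  hd_error (u ++ v) = match hd_error u with Some e => Some e | None => hd_error v end.
Proof. destruct u; reflexivity. Qed.

Lemma last_error_app u v :
  last_error (u ++ v) = match last_error v with Some e => Some e | None => last_error u end.
Proof. unfold last_error; rewrite rev_app_distr; apply hd_error_app. Qed.

Lemma last_error_None l : last_error l = None -> l = [].
Proof.
  unfold last_error; intro H; rewrite <- (rev_involutive l).
  destruct (rev l); [reflexivity | discriminate].
Qed.

Lemma last_error_Some l e : last_error l = Some e -> exists r, l = r ++ [e].
Proof.
  unfold last_error; intro H; exists (rev (tl (rev l))).
  rewrite <- (rev_involutive l) at 1.
  destruct (rev l) as [|b r]; [discriminate|].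
  injection H as ->; reflexivity.
Qed.

Lemma last_error_cons a l : l <> [] -> last_error (a :: l) = last_error l.
Proof.
  intro Hl; change (a :: l) with ([a] ++ l); rewrite last_error_app.
  destruct (last_error l) eqn:E; [reflexivity|].
  exfalso; exact (Hl (last_error_None _ E)).
Qed.

Lemma no_cancel_app l p u v q m : p <> [] -> q <> [] ->
  no_cancel u v -> no_cancel p v -> no_cancel u q -> no_cancel p q ->
  no_cancel ((l ++ p) ++ u) (v ++ q ++ m).
Proof.
  intros Hp Hq Huv Hpv Huq Hpq a b.
  rewrite !last_error_app, !hd_error_app.
  destruct (last_error p) as [ap|] eqn:Ep; [|exfalso; exact (Hp (last_error_None _ Ep))].
  destruct (hd_error q) as [bq|] eqn:Eq; [|destruct q; [contradiction | discriminate]].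
  destruct (last_error u) eqn:Eu, (hd_error v) eqn:Ev; intros [= <-] [= <-].
  - exact (Huv _ _ Eu Ev).
  - exact (Huq _ _ Eu Eq).
  - exact (Hpv _ _ Ep Ev).
  - exact (Hpq _ _ Ep Eq).
Qed.

Lemma reduced_app u v : reduced (u ++ v) <-> reduced u /\ reduced v /\ no_cancel u v.
Proof.
  induction u as [|a u IH].
  - unfold no_cancel; simpl; intuition discriminate.
  - destruct u as [|c u].
    + destruct v as [|b v]; unfold no_cancel; simpl.
      * intuition discriminate.
      * split.
        -- intros [Hb Hv]; repeat split; auto.
           intros a' b' [= <-] [= <-]; exact Hb.
        -- intros (_ & Hv & Hb); split; auto.
    + change ((c <> linv a /\ reduced (c :: u ++ v)) <->
              (c <> linv a /\ reduced (c :: u)) /\ reduced v /\ no_cancel (a :: c :: u) v).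
      assert (Hnc : no_cancel (a :: c :: u) v <-> no_cancel (c :: u) v)
        by (unfold no_cancel; rewrite last_error_cons by discriminate; reflexivity).
      change ((c :: u) ++ v) with (c :: u ++ v) in IH; rewrite Hnc, IH; tauto.
Qed.

Lemma fold_push_app u v : reduced (u ++ v) -> fold_right (@push X) v u = u ++ v.
Proof.
  induction u as [|a u IH]; simpl; auto.
  intro H; rewrite IH by exact (reduced_tail _ _ H).
  unfold push; destruct (u ++ v) as [|b t]; auto.
  destruct (letter_dec b (linv a)); auto.
  simpl in H; destruct H; contradiction.
Qed.

Lemma word_inv_length K : length (word_inv K) = length K.
Proof. unfold word_inv; rewrite length_rev, length_map; reflexivity. Qed.

Lemma fold_push_word_inv K v : fold_right (@push X) (word_inv K ++ v) K = v.
Proof.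
  revert v; induction K as [|k K IH]; intro v; simpl; auto.
  unfold word_inv; simpl; rewrite <- app_assoc; simpl; fold (word_inv K); rewrite IH.
  unfold push; destruct (letter_dec (linv k) (linv k)); congruence.
Qed.

Lemma max_cancellation u v :
  exists u' K v', u = u' ++ K /\ v = word_inv K ++ v' /\ no_cancel u' v'.
Proof.
  revert u; induction v as [|b v IH]; intro u.
  - exists u, [], []; rewrite app_nil_r; repeat split; intros a b _ [=].
  - induction u as [|a u _] using rev_ind.
    + exists [], [], (b :: v); repeat split; intros a' b' [=].
    + destruct (classic (b = linv a)) as [->|Hb].
      * destruct (IH u) as (u' & K & v' & -> & -> & Hj).
        exists u', (K ++ [a]), v'; repeat split; auto.
        -- symmetry; apply app_assoc.
        -- unfold word_inv; rewrite map_app, rev_app_distr; reflexivity.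
      * exists (u ++ [a]), [], (b :: v); rewrite app_nil_r; repeat split.
        intros a' b'; unfold last_error; rewrite rev_app_distr; intros [= <-] [= <-]; exact Hb.
Qed.

End Words.

Section Countable.
Variable T : Type.
Implicit Types P Q : T -> Prop.

Definition countable P : Prop :=
  exists f : T -> nat, forall a b, P a -> P b -> f a = f b -> a = b.

Lemma countable_sub P Q : (forall a, P a -> Q a) -> countable Q -> countable P.
Proof. intros H [f Hf]; exists f; auto. Qed.

Lemma countable_subsingleton P : (forall a b, P a -> P b -> a = b) -> countable P.
Proof. intro H; exists (fun _ => 0); auto. Qed.

Lemma countable_union P Q : countable P -> countable Q -> countable (fun a => P a \/ Q a).
Proof.
  intros [f Hf] [g Hg].
  exists (fun a => if excluded_middle_informative (P a) then 2 * f a else S (2 * g a)).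
  intros a b Ha Hb E.
  destruct (excluded_middle_informative (P a)), (excluded_middle_informative (P b)); try lia.
  - apply Hf; auto; lia.
  - apply Hg; [destruct Ha | destruct Hb | lia]; tauto.
Qed.

Lemma countable_list_union (l : list T) (Q : T -> T -> Prop) :
  (forall a, In a l -> countable (Q a)) -> countable (fun y => exists a, In a l /\ Q a y).
Proof.
  induction l as [|a l IH]; intro H.
  - apply countable_subsingleton; intros y z [b [[] _]].
  - apply countable_sub with (fun y => Q a y \/ exists b, In b l /\ Q b y).
    + intros y [b [[<-|Hb] Hq]]; [left | right; exists b]; auto.
    + apply countable_union; [apply H; left | apply IH; intros; apply H; right]; auto.
Qed.

Lemma countable_In (l : list T) : countable (fun y => In y l).
Proof.
  apply countable_sub with (fun y => exists a, In a l /\ a = y).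
  - intros y Hy; exists y; auto.
  - apply countable_list_union; intros a _.
    apply countable_subsingleton; intros; subst; reflexivity.
Qed.

Lemma countable_nat_fibres P (h : T -> nat) :
  (forall n, countable (fun a => P a /\ h a = n)) -> countable P.
Proof.
  intro H.
  destruct (constructive_indefinite_description _ (choice _ H)) as [g Hg].
  exists (fun a => Cantor.to_nat (h a, g (h a) a)).
  intros a b Ha Hb E.
  apply (f_equal Cantor.of_nat) in E; rewrite !Cantor.cancel_of_to in E.
  injection E as E1 E2; rewrite E1 in E2; apply (Hg (h b)); auto.
Qed.

Lemma uncountable_nat_fibre (h : T -> nat) :
  uncountable T -> exists n, ~ countable (fun a => h a = n).
Proof.
  intro Hunc; apply NNPP; intro Hn; apply Hunc.
  destruct (countable_nat_fibres (fun _ => True) h) as [f Hf]; [|exists f; auto].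
  intro n; apply countable_sub with (fun a => h a = n); [tauto|].
  apply NNPP; intro Hc; apply Hn; exists n; exact Hc.
Qed.

End Countable.

Section StrictOrder.
Variables (T : Type) (lt : T -> T -> Prop).
Hypothesis lt_trans : forall a b c, lt a b -> lt b c -> lt a c.
Hypothesis lt_total : forall a b, lt a b \/ a = b \/ lt b a.
Hypothesis lt_irrefl : forall a, ~ lt a a.

Lemma StronglySorted_NoDup l : StronglySorted lt l -> NoDup l.
Proof.
  induction l as [|a l IH]; intro H; constructor.
  - apply StronglySorted_inv in H as [_ F]; rewrite Forall_forall in F.
    intro Ha; exact (lt_irrefl (F a Ha)).
  - apply IH; apply StronglySorted_inv in H; tauto.
Qed.

Lemma StronglySorted_insert (l : list T) y : StronglySorted lt l -> ~ In y l ->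
  exists l', StronglySorted lt l' /\ length l' = S (length l) /\
             (forall z, In z l' <-> In z (y :: l)).
Proof.
  induction l as [|a l IH]; intros Hs Hy.
  - exists [y]; split; [repeat constructor | split; [reflexivity | tauto]].
  - apply StronglySorted_inv in Hs as [Hs Hf]; rewrite Forall_forall in Hf.
    destruct (lt_total y a) as [H|[->|H]].
    + exists (y :: a :: l); split; [|split; [reflexivity | tauto]].
      constructor; [constructor; [exact Hs | rewrite Forall_forall; exact Hf]|].
      rewrite Forall_forall; intros z [<-|Hz]; eauto.
    + exfalso; apply Hy; left; reflexivity.
    + destruct (IH Hs) as (l' & H1 & H2 & H3); [intro; apply Hy; right; assumption|].
      exists (a :: l'); split; [|split; [simpl; lia|]].
      * constructor; [exact H1|]; rewrite Forall_forall.
        intros z Hz; apply H3 in Hz as [<-|Hz]; auto.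
      * intro z; simpl; rewrite H3; simpl; tauto.
Qed.

End StrictOrder.

Lemma well_founded_irrefl (T : Type) (lt : T -> T -> Prop) :
  well_founded lt -> forall a, ~ lt a a.
Proof. intros Hwf a H; induction (Hwf a) as [a _ IH]; exact (IH a H H). Qed.

Lemma log2_parity_flip E s : 1 <= s ->
  exists k, 1 <= k /\ Nat.odd (Nat.log2 (E + s * S k)) = negb (Nat.odd (Nat.log2 (E + s * k))).
Proof.
  intro Hs.
  remember (E + s) as J eqn:HJdef.
  assert (HJ : J < 2 ^ J) by (apply Nat.pow_gt_lin_r; lia).
  assert (HJ1 : 2 ^ S J = 2 * 2 ^ J) by apply Nat.pow_succ_r'.
  assert (HJ2 : 2 ^ S (S J) = 2 * 2 ^ S J) by apply Nat.pow_succ_r'.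
  assert (Hdiv := Nat.div_mod (2 ^ S J - 1 - E) s ltac:(lia)).
  assert (Hmod := Nat.mod_upper_bound (2 ^ S J - 1 - E) s ltac:(lia)).
  exists ((2 ^ S J - 1 - E) / s).
  set (k := (2 ^ S J - 1 - E) / s) in *.
  assert (Hk1 : 1 <= k).
  { destruct (Nat.eq_dec k 0) as [Hk0|]; [rewrite Hk0, Nat.mul_0_r in Hdiv|]; lia. }
  split; [exact Hk1|].
  rewrite Nat.mul_succ_r.
  rewrite (Nat.log2_unique (E + s * k) J), (Nat.log2_unique (E + (s * k + s)) (S J)) by lia.
  rewrite Nat.odd_succ, Nat.negb_odd; reflexivity.
Qed.

Section Sequence.
Variables (X T : Type) (x : T -> FreeGroup X).
Hypothesis x_inj : forall a b, x a = x b -> a = b.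
Variable lt : T -> T -> Prop.
Hypothesis lt_trans : forall a b c, lt a b -> lt b c -> lt a c.
Hypothesis lt_total : forall a b, lt a b \/ a = b \/ lt b a.
Hypothesis lt_irrefl : forall a, ~ lt a a.

Let w a := proj1_sig (x a).

Lemma w_inj a b : w a = w b -> a = b.
Proof.
  unfold w; intro E; apply x_inj.
  destruct (x a) as [u pu], (x b) as [v pv]; simpl in E; subst.
  f_equal; apply proof_irrelevance.
Qed.

Definition framed (S : T -> Prop) (A B : list (letter X)) (d : nat) : Prop :=
  forall a, S a -> exists r, w a = A ++ r ++ B /\ length r = d.

Definition spread (S : T -> Prop) (A B : list (letter X)) : Prop :=
  (forall e, countable (fun a => S a /\ exists r, w a = A ++ e :: r ++ B)) /\
  (forall e, countable (fun a => S a /\ exists r, w a = A ++ r ++ e :: B)).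

Lemma spread_frame_exists d : forall S A B, ~ countable S -> framed S A B d ->
  exists S' A' B' d', ~ countable S' /\ 1 <= d' /\ framed S' A' B' d' /\ spread S' A' B'.
Proof.
  induction d as [|d IH]; intros S A B HS HA.
  - exfalso; apply HS, countable_subsingleton; intros a b Ha Hb.
    destruct (HA a Ha) as [[|] [Ea La]]; [|discriminate].
    destruct (HA b Hb) as [[|] [Eb Lb]]; [|discriminate].
    apply w_inj; congruence.
  - destruct (classic (spread S A B)) as [Hsp|Hsp].
    { exists S, A, B, (Datatypes.S d); split; [exact HS | split; [lia | split; assumption]]. }
    apply not_and_or in Hsp as [Hsp|Hsp]; apply not_all_ex_not in Hsp as [e He].
    + apply (IH _ (A ++ [e]) B He); intros a [Sa [r Er]].
      exists r; split; [rewrite Er, <- app_assoc; reflexivity|].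
      destruct (HA a Sa) as [r0 [E0 L0]]; rewrite Er in E0.
      apply (f_equal (@length _)) in E0; rewrite !length_app in E0; simpl in E0.
      rewrite ?length_app in E0; lia.
    + apply (IH _ A (e :: B) He); intros a [Sa [r Er]].
      exists r; split; [exact Er|].
      destruct (HA a Sa) as [r0 [E0 L0]]; rewrite Er in E0.
      apply (f_equal (@length _)) in E0; rewrite !length_app in E0; simpl in E0.
      rewrite ?length_app in E0; lia.
Qed.

Section Generic.
Variables (P : T -> Prop) (A B A' B' K : list (letter X)) (d : nat).
Hypothesis P_uncountable : ~ countable P.
Hypothesis d_pos : 1 <= d.
Hypothesis P_framed : framed P A B d.
Hypothesis P_spread : spread P A B.
Hypothesis B_split : B = B' ++ K.
Hypothesis A_split : A = word_inv K ++ A'.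
Hypothesis B'A'_no_cancel : no_cancel B' A'.

Definition core a := firstn d (skipn (length A) (w a)).

Lemma core_spec a : P a -> w a = A ++ core a ++ B /\ length (core a) = d.
Proof.
  intro Pa; destruct (P_framed Pa) as [r [E L]]; unfold core; rewrite E.
  rewrite skipn_app, skipn_all, Nat.sub_diag; simpl.
  rewrite firstn_app, <- L, firstn_all, Nat.sub_diag; simpl; rewrite app_nil_r; auto.
Qed.

Lemma core_nonnil a : P a -> core a <> [].
Proof. intros Pa E; destruct (core_spec Pa) as [_ L]; rewrite E in L; simpl in L; lia. Qed.

Lemma countable_blocked_left u : countable (fun y => P y /\ ~ no_cancel u (core y)).
Proof.
  destruct (last_error u) as [e|] eqn:Hu.
  - apply countable_sub with (fun y => P y /\ exists r, w y = A ++ linv e :: r ++ B);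
      [|apply P_spread].
    intros y [Py Hy]; split; [exact Py|].
    destruct (core y) as [|b r] eqn:Hc; [exfalso; apply Hy; intros ? ? _ [=]|].
    assert (Hb : b = linv e).
    { apply NNPP; intro Hb; apply Hy; intros a' b'; rewrite Hu; intros [= <-] [= <-]; exact Hb. }
    exists r; destruct (core_spec Py) as [Hw _]; rewrite Hw, Hc, Hb; reflexivity.
  - apply countable_subsingleton; intros a b [_ Ha].
    exfalso; apply Ha; intros a' ? Ha'; rewrite Hu in Ha'; discriminate.
Qed.

Lemma countable_blocked_right u : countable (fun y => P y /\ ~ no_cancel (core y) u).
Proof.
  destruct (hd_error u) as [e|] eqn:Hu.
  - apply countable_sub with (fun y => P y /\ exists r, w y = A ++ r ++ linv e :: B);
      [|apply P_spread].
    intros y [Py Hy]; split; [exact Py|].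
    destruct (last_error (core y)) as [b|] eqn:Hc;
      [|exfalso; apply Hy; intros ? ?; rewrite Hc; intros [=]].
    assert (Hb : b = linv e).
    { apply NNPP; intro Hb; apply Hy; intros a' b'; rewrite Hc, Hu; intros [= <-] [= <-].
      intro E; apply Hb; rewrite E, linvK; reflexivity. }
    destruct (last_error_Some _ Hc) as [r Er].
    exists r; destruct (core_spec Py) as [Hw _]; rewrite Hw, Er, Hb, <- app_assoc; reflexivity.
  - apply countable_subsingleton; intros a b [_ Ha].
    exfalso; apply Ha; intros ? b' _ Hb'; rewrite Hu in Hb'; discriminate.
Qed.

Definition generic (l : list T) : Prop :=
  (forall a, In a l -> P a /\ no_cancel B' (core a) /\ no_cancel (core a) A') /\
  (forall a b, In a l -> In b l -> a <> b -> no_cancel (core a) (core b)).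

Lemma generic_tail y l : generic (y :: l) -> generic l.
Proof. intros [H1 H2]; split; intros; [apply H1 | apply H2]; simpl; auto. Qed.

Lemma generic_extend l : generic l -> exists y, ~ In y l /\ generic (y :: l).
Proof.
  intros [Hl1 Hl2].
  assert (Hy : exists y, P y /\ ~ In y l /\ no_cancel B' (core y) /\ no_cancel (core y) A' /\
              forall a, In a l -> no_cancel (core a) (core y) /\ no_cancel (core y) (core a)).
  { apply NNPP; intro Hn; apply P_uncountable.
    apply countable_sub with (fun y => In y l \/ (P y /\ ~ no_cancel B' (core y)) \/
      (P y /\ ~ no_cancel (core y) A') \/
      (exists a, In a l /\ (P y /\ ~ no_cancel (core a) (core y))) \/
      (exists a, In a l /\ (P y /\ ~ no_cancel (core y) (core a)))).
    - intros y Py; apply NNPP; intro Hbad; apply Hn; exists y.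
      split; [exact Py|].
      split; [intro; apply Hbad; left; assumption|].
      split; [apply NNPP; intro; apply Hbad; right; left; auto|].
      split; [apply NNPP; intro; apply Hbad; do 2 right; left; auto|].
      intros a Ha; split; apply NNPP; intro; apply Hbad; do 3 right;
        [left | right]; exists a; auto.
    - repeat apply countable_union; auto using countable_In, countable_blocked_left,
        countable_blocked_right, countable_list_union. }
  destruct Hy as (y & Py & Hyl & Hy1 & Hy2 & Hy3); exists y; split; [exact Hyl|split].
  - intros a [<-|Ha]; auto.
  - intros a b [<-|Ha] [<-|Hb] Hab; [congruence | apply Hy3 | apply Hy3 | apply Hl2]; auto.
Qed.

Lemma generic_sorted_exists k : exists l, StronglySorted lt l /\ length l = k /\ generic l.
Proof.
  induction k as [|k IH].
  - exists []; repeat split; try constructor; simpl; tauto.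
  - destruct IH as (l & Hs & Hl & Hg).
    destruct (generic_extend Hg) as (y & Hy & Hg').
    destruct (StronglySorted_insert lt_trans lt_total y Hs Hy) as (l' & Hs' & Hl' & Hin).
    destruct Hg' as [Hg1 Hg2].
    exists l'; split; [exact Hs'|split; [lia|split]].
    + intros a Ha; apply Hg1, Hin, Ha.
    + intros a b Ha Hb; apply Hg2; apply Hin; assumption.
Qed.

Fixpoint fp_word (l : list T) : list (letter X) :=
  match l with
  | [] => []
  | y :: r => core y ++ match r with [] => B | _ :: _ => B' ++ A' ++ fp_word r end
  end.

Lemma fp_word_length l : l <> [] -> (forall a, In a l -> P a) ->
  length (fp_word l) + (length B' + length A') =
  length B + (d + (length B' + length A')) * length l.
Proof.
  induction l as [|y [|z r] IH]; intros Hne Hl; [congruence| |].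
  all: destruct (core_spec (Hl y (or_introl eq_refl))) as [_ Ly].
  - simpl; rewrite length_app, Ly; lia.
  - change (fp_word (y :: z :: r)) with (core y ++ B' ++ A' ++ fp_word (z :: r)).
    assert (IH' := IH ltac:(discriminate) ltac:(intros; apply Hl; right; assumption)).
    rewrite !length_app, Ly; cbn [length] in *; lia.
Qed.

Lemma generic_no_cancel y z r : generic (y :: z :: r) -> ~ In y (z :: r) ->
  no_cancel (A ++ core y ++ B') (A' ++ fp_word (z :: r)).
Proof.
  intros [Hg1 Hg2] Hyn.
  destruct (Hg1 y (or_introl eq_refl)) as (Py & _ & Hy2).
  destruct (Hg1 z (or_intror (or_introl eq_refl))) as (Pz & Hz1 & _).
  rewrite app_assoc; change (fp_word (z :: r)) with
    (core z ++ match r with [] => B | _ :: _ => B' ++ A' ++ fp_word r end).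
  apply no_cancel_app; auto using core_nonnil.
  apply Hg2; simpl; auto.
  intros <-; apply Hyn; left; reflexivity.
Qed.

Lemma fin_prod_fp_word l : l <> [] -> NoDup l -> generic l ->
  proj1_sig (fin_prod x l) = A ++ fp_word l.
Proof.
  induction l as [|y [|z r] IH]; intros Hne Hnd Hg; [congruence| |].
  all: assert (Py : P y) by (apply Hg; left; reflexivity).
  all: destruct (core_spec Py) as [Hy _].
  all: change (proj1_sig (fin_prod x (y :: ?l))) with
         (fold_right (@push X) (proj1_sig (fin_prod x l)) (w y)).
  - cbn [fin_prod fold_right proj1_sig fg_one fp_word].
    rewrite fold_push_app; [rewrite app_nil_r, Hy; reflexivity|].
    rewrite app_nil_r; exact (proj2_sig (x y)).
  - inversion Hnd as [|? ? Hyn Hnd']; subst.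
    assert (Hg' := generic_tail Hg).
    assert (Hzr : proj1_sig (fin_prod x (z :: r)) = A ++ fp_word (z :: r))
      by (apply IH; [discriminate | assumption | assumption]).
    assert (Hy' : w y = (A ++ core y ++ B') ++ K) by (rewrite Hy, B_split, !app_assoc; reflexivity).
    assert (Hcancel : fold_right (@push X) (A ++ fp_word (z :: r)) K = A' ++ fp_word (z :: r))
      by (rewrite A_split, <- app_assoc; apply fold_push_word_inv).
    assert (Hred : reduced ((A ++ core y ++ B') ++ A' ++ fp_word (z :: r))).
    { apply reduced_app; split; [|split].
      - assert (Rw := proj2_sig (x y)); fold (w y) in Rw; rewrite Hy' in Rw.
        apply reduced_app in Rw; tauto.
      - assert (Rz := proj2_sig (fin_prod x (z :: r))).
        rewrite Hzr, A_split, <- app_assoc in Rz; apply reduced_app in Rz; tauto.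
      - exact (generic_no_cancel Hg Hyn). }
    rewrite Hzr, Hy', fold_right_app, Hcancel, fold_push_app by exact Hred.
    change (fp_word (y :: z :: r)) with (core y ++ B' ++ A' ++ fp_word (z :: r)).
    rewrite !app_assoc; reflexivity.
Qed.

Lemma fin_prod_length l : l <> [] -> StronglySorted lt l -> generic l ->
  length (proj1_sig (fin_prod x l)) + (length B' + length A') =
  length A + length B + (d + (length B' + length A')) * length l.
Proof.
  intros Hne Hs Hg.
  rewrite fin_prod_fp_word, length_app, <- Nat.add_assoc, fp_word_length; auto.
  - lia.
  - intros a Ha; apply Hg, Ha.
  - exact (StronglySorted_NoDup lt_irrefl Hs).
Qed.

Lemma generic_growth : exists E s, 1 <= s /\ forall k, 1 <= k -> exists y l,
  StronglySorted lt (y :: l) /\ length l = k /\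
  length (proj1_sig (fin_prod x (y :: l))) = E + s * S k /\
  length (proj1_sig (fin_prod x l)) = E + s * k.
Proof.
  assert (Hc : length B' + length A' <= length A + length B)
    by (rewrite A_split, B_split, !length_app, word_inv_length; lia).
  exists (length A + length B - (length B' + length A')), (d + (length B' + length A')).
  split; [lia|]; intros k Hk.
  destruct (generic_sorted_exists (S k)) as ([|y l] & Hs & Hl & Hg); [discriminate|].
  cbn [length] in Hl; injection Hl as Hl; exists y, l; split; [exact Hs|split; [exact Hl|]].
  assert (Hl0 : l <> []) by (intros ->; simpl in Hl; lia).
  assert (Hyl := fin_prod_length (l := y :: l) ltac:(discriminate) Hs Hg).
  assert (Hl' := fin_prod_length Hl0 (proj1 (StronglySorted_inv Hs)) (generic_tail Hg)).
  cbn [length] in Hyl; rewrite Hl in Hyl, Hl'; split; lia.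
Qed.

End Generic.

Lemma linear_growth : uncountable T -> exists E s, 1 <= s /\ forall k, 1 <= k -> exists y l,
  StronglySorted lt (y :: l) /\ length l = k /\
  length (proj1_sig (fin_prod x (y :: l))) = E + s * S k /\
  length (proj1_sig (fin_prod x l)) = E + s * k.
Proof.
  intro Hunc.
  destruct (uncountable_nat_fibre (fun a => length (w a)) Hunc) as [n Hn].
  destruct (@spread_frame_exists n _ [] [] Hn) as (P & A & B & d & HP & Hd & Hframed & Hspread).
  { intros a Ha; exists (w a); rewrite app_nil_r; split; [reflexivity | exact Ha]. }
  destruct (max_cancellation B A) as (B' & K & A' & HB & HA & Hj).
  eapply generic_growth; eassumption.
Qed.

End Sequence.

Definition log2_parity (X : Type) (g : FreeGroup X) : bool :=
  Nat.odd (Nat.log2 (length (proj1_sig g))).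

Theorem theorem4p1 (X : Type) (T : Type) (lt : T -> T -> Prop) :
  strict_well_order lt -> uncountable T ->
  exists c : FreeGroup X -> bool,
    forall x : T -> FreeGroup X,
      (forall a b, x a = x b -> a = b) ->
      forall i : bool, ~ (forall g, in_FP lt x g -> c g = i).
Proof.
  intros (Hwf & Htrans & Htotal) Hunc.
  exists (@log2_parity X); intros x x_inj i Hmono.
  destruct (linear_growth _ x_inj _ Htrans Htotal (well_founded_irrefl Hwf) Hunc)
    as (E & s & Hs & Hgrowth).
  destruct (log2_parity_flip E Hs) as (k & Hk & Hflip).
  destruct (Hgrowth k Hk) as (y & l & Hsort & Hl & Hyl & Hl').
  assert (Cyl : log2_parity (fin_prod x (y :: l)) = i)
    by (apply Hmono; exists (y :: l); split; [discriminate | split; auto]).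
  assert (Cl : log2_parity (fin_prod x l) = i).
  { apply Hmono; exists l; split; [intros ->; simpl in Hl; lia|].
    split; [exact (proj1 (StronglySorted_inv Hsort)) | reflexivity]. }
  unfold log2_parity in Cyl, Cl; rewrite Hyl in Cyl; rewrite Hl' in Cl.
  rewrite Cyl, Cl in Hflip; destruct i; discriminate.
Qed.
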